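(* Let $a,b$ be fixed nonzero complex constants, let $\{a_i\},\{b_i\},\{c_i\},\{d_i\}$ ($i\in\mathbb{Z}$) be complex sequences of nonzero numbers, and let $m,n\ge0$ be integers such that for $-n\le j\le m$ the quantities $(a_j+c_j)(a_j+\frac{b}{ac_j})$, $(a_j+d_j)(a_j+\frac{b}{ad_j})$, $(b_j-c_j)(1-\frac{b}{ab_jc_j})$, $(b_j-d_j)(1-\frac{b}{ab_jd_j})$ are nonzero. Then $$\sum_{k=-n}^{m}(a_k+b_k)\Big(a_k+\frac{b}{ab_k}\Big)(c_k-d_k)\Big(1-\frac{b}{ac_kd_k}\Big)\frac{\prod_{j=1}^{k-1}(a_j+c_j)(a_j+\frac{b}{ac_j})}{\prod_{j=1}^{k}(a_j+d_j)(a_j+\frac{b}{ad_j})}\frac{\prod_{j=1}^{k-1}(b_j-d_j)(1-\frac{b}{ab_jd_j})}{\prod_{j=1}^{k}(b_j-c_j)(1-\frac{b}{ab_jc_j})}$$ $$=\frac{\prod_{j=1}^{m}(a_j+c_j)(a_j+\frac{b}{ac_j})}{\prod_{j=1}^{m}(a_j+d_j)(a_j+\frac{b}{ad_j})}\frac{\prod_{j=1}^{m}(b_j-d_j)(1-\frac{b}{ab_jd_j})}{\prod_{j=1}^{m}(b_j-c_j)(1-\frac{b}{ab_jc_j})}-\frac{\prod_{j=-n}^{0}(a_j+d_j)(a_j+\frac{b}{ad_j})}{\prod_{j=-n}^{0}(a_j+c_j)(a_j+\frac{b}{ac_j})}\frac{\prod_{j=-n}^{0}(b_j-c_j)(1-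\frac{b}{ab_jc_j})}{\prod_{j=-n}^{0}(b_j-d_j)(1-\frac{b}{ab_jd_j})}.$$
   Context: Products over integer ranges follow the convention: $\prod_{j=k}^{m}A_j=A_k\cdots A_m$ if $m\ge k$; $=1$ if $m=k-1$; $=(A_{m+1}\cdots A_{k-1})^{-1}$ if $m\le k-2$. The constants $a,b$ are distinct objects from the sequences $a_k,b_k$. *)

From HB Require Import structures.
From mathcomp Require Import all_boot all_order all_algebra.
From mathcomp Require Import complex.
From mathcomp Require Import reals.
Set Implicit Arguments. Unset Strict Implicit. Unset Printing Implicit Defensive.
Import Order.TTheory GRing.Theory Num.Theory.
Local Open Scope ring_scope.

(* Products over integer ranges with the convention of the paper:
   prod_{j=k}^{m} A_j = A_k ... A_m        if m >= k,
                      = 1                  if m = k-1,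
                      = (A_{m+1} ... A_{k-1})^{-1}  if m <= k-2. *)
Definition iprod {F : fieldType} (A : int -> F) (k m : int) : F :=
  if (k <= m + 1)%R then \prod_(i < absz (m + 1 - k)%R) A (k + (i : nat)%:Z)
  else (\prod_(i < absz (k - 1 - m)%R) A (m + 1 + (i : nat)%:Z))^-1.

Definition isum {F : fieldType} (A : int -> F) (lo hi : int) : F :=
  \sum_(i < absz (hi + 1 - lo)%R | (lo <= hi)%R) A (lo + (i : nat)%:Z).

From HB Require Import structures.
From mathcomp Require Import all_boot all_order all_algebra.
From mathcomp Require Import complex.
From mathcomp Require Import reals.
From mathcomp Require Import zify ring.
Set Implicit Arguments. Unset Strict Implicit. Unset Printing Implicit Defensive.
Import Order.TTheory GRing.Theory Num.Theory.
Local Open Scope ring_scope.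

(* Put p_k(x) = (a_k + x)(a_k + b/(a x)) and q_k(x, y) = (x - y)(1 - b/(a x y)).
   The three-term identity p_k(b_k) q_k(c_k, d_k) = p_k(c_k) q_k(b_k, d_k) - p_k(d_k) q_k(b_k, c_k)
   makes the k-th summand equal to R(k) - R(k-1), where
   R(k) = prod_{j=1}^k p_j(c_j) q_j(b_j, d_j) / (p_j(d_j) q_j(b_j, c_j)).
   The sum telescopes to R(m) - R(-n-1), and by the product convention R(-n-1)
   is the reciprocal of the corresponding ratio of products over [-n, 0]. *)

Section IntegerRangeProducts.
Variables (F : fieldType) (A : int -> F).

Lemma iprod_reversed (s : int) (n : nat) :
  (\prod_(i < n) A (s + (i : nat)%:Z))^-1 = iprod A (s + n%:Z) (s - 1).
Proof.
rewrite /iprod; case: ifP => [h|_].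
  have n0 : n = 0%N by lia.
  have -> : absz (s - 1 + 1 - (s + n%:Z))%R = 0%N by lia.
  by rewrite n0 !big_ord0 invr1.
have -> : absz (s + n%:Z - 1 - (s - 1))%R = n by lia.
by congr (_^-1); apply: eq_bigr => i _; rewrite subrK.
Qed.

Lemma iprodV (s t : int) : t <= s -> iprod A s (t - 1) = (iprod A t (s - 1))^-1.
Proof.
move=> ts; have [n ->] : exists n : nat, s = t + n%:Z by exists (absz (s - t)%R); lia.
rewrite -iprod_reversed; congr (_^-1); rewrite /iprod ifT; last by lia.
by have -> : absz (t + n%:Z - 1 + 1 - t)%R = n by lia.
Qed.

Lemma iprodSr (s k : int) : A k != 0 -> iprod A s k = iprod A s (k - 1) * A k.
Proof.
move=> Ak0; case: (lerP s k) => sk.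
  rewrite /iprod ifT ?ifT; try lia.
  have -> : absz (k + 1 - s)%R = (absz (k - 1 + 1 - s)%R).+1 by lia.
  by rewrite big_ord_recr /=; congr (_ * A _); lia.
have [n ->] : exists n : nat, s = k + 1 + n%:Z by exists (absz (s - k - 1)%R); lia.
have := iprod_reversed (k + 1) n; rewrite addrK => <-.
have := iprod_reversed k n.+1; rewrite -add1n PoszD addrA => <-.
rewrite big_ord_recl /= addr0.
under [in RHS]eq_bigr => i _ do rewrite /bump /= -add1n PoszD addrA.
by rewrite invfM mulrAC mulVf // mul1r.
Qed.

End IntegerRangeProducts.

Lemma isum_telescope (F : fieldType) (u T : int -> F) (lo hi : int) : lo <= hi + 1 ->
  (forall k, lo <= k <= hi -> u k = T k - T (k - 1)) ->
  isum u lo hi = T hi - T (lo - 1).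
Proof.
move=> lohi uT; have [N hiE] : exists N : nat, hi = lo + N%:Z - 1.
  by exists (absz (hi + 1 - lo)%R); lia.
subst hi.
rewrite /isum addrNK addrAC subrr add0r absz_nat.
case: N {lohi} uT => [|N] uT; first by rewrite big_ord0 addr0 subrr.
have -> : (lo <= lo + N.+1%:Z - 1) = true by lia.
rewrite -(big_mkord xpredT (fun i => u (lo + i%:Z))).
rewrite (telescope_sumr_eq (fun i => T (lo + i%:Z - 1))) ?leq0n // => [|k /andP[_ kN]].
  by rewrite addr0.
rewrite uT; last by lia.
by rewrite -addn1 PoszD addrA addrK.
Qed.

Section ProductRatioTelescope.
Variables (F : fieldType) (PC PD QC QD : int -> F) (s : int).

Definition prod_ratio (k : int) : F :=
  iprod PC s k / iprod PD s k * (iprod QD s k / iprod QC s k).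

Lemma prod_ratio_diff (k : int) :
  PC k != 0 -> PD k != 0 -> QC k != 0 -> QD k != 0 ->
  (PC k * QD k - PD k * QC k)
    * (iprod PC s (k - 1) / iprod PD s k) * (iprod QD s (k - 1) / iprod QC s k)
  = prod_ratio k - prod_ratio (k - 1).
Proof.
move=> PC0 PD0 QC0 QD0.
rewrite /prod_ratio (iprodSr s PC0) (iprodSr s PD0) (iprodSr s QC0) (iprodSr s QD0).
(* The prefix products [iprod PD s (k - 1)], [iprod QC s (k - 1)] may vanish, so
   their inverses enter only as opaque scalars. *)
rewrite !invfM; move: (iprod PD s (k - 1))^-1 (iprod QC s (k - 1))^-1 => y w.
by field; rewrite PD0 QC0.
Qed.

End ProductRatioTelescope.

Lemma three_term_identity (F : fieldType) (a b x y c d : F) :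
  a != 0 -> y != 0 -> c != 0 -> d != 0 ->
  (x + y) * (x + b / (a * y)) * (c - d) * (1 - b / (a * c * d)) =
  (x + c) * (x + b / (a * c)) * ((y - d) * (1 - b / (a * y * d)))
  - (x + d) * (x + b / (a * d)) * ((y - c) * (1 - b / (a * y * c))).
Proof. by move=> a0 y0 c0 d0; field; rewrite a0 y0 c0 d0. Qed.

Theorem corollary3p6 (R : realType) (a b : R[i])
  (as_ bs cs ds : int -> R[i]) (m n : nat) :
  a != 0 -> b != 0 ->
  (forall i, as_ i != 0) -> (forall i, bs i != 0) ->
  (forall i, cs i != 0) -> (forall i, ds i != 0) ->
  (forall j : int, - (n%:Z) <= j <= m%:Z ->
     [/\ (as_ j + cs j) * (as_ j + b / (a * cs j)) != 0,
         (as_ j + ds j) * (as_ j + b / (a * ds j)) != 0,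
         (bs j - cs j) * (1 - b / (a * bs j * cs j)) != 0 &
         (bs j - ds j) * (1 - b / (a * bs j * ds j)) != 0]) ->
  let PC := fun j => (as_ j + cs j) * (as_ j + b / (a * cs j)) in
  let PD := fun j => (as_ j + ds j) * (as_ j + b / (a * ds j)) in
  let QC := fun j => (bs j - cs j) * (1 - b / (a * bs j * cs j)) in
  let QD := fun j => (bs j - ds j) * (1 - b / (a * bs j * ds j)) in
  isum (fun k =>
      (as_ k + bs k) * (as_ k + b / (a * bs k)) * (cs k - ds k)
        * (1 - b / (a * cs k * ds k))
        * (iprod PC 1 (k - 1) / iprod PD 1 k)
        * (iprod QD 1 (k - 1) / iprod QC 1 k))
    (- (n%:Z)) (m%:Z)
  = iprod PC 1 m%:Z / iprod PD 1 m%:Z * (iprod QD 1 m%:Z / iprod QC 1 m%:Z)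
    - iprod PD (- (n%:Z)) 0 / iprod PC (- (n%:Z)) 0
      * (iprod QC (- (n%:Z)) 0 / iprod QD (- (n%:Z)) 0).
Proof.
move=> a0 _ _ bs0 cs0 ds0 factors0 PC PD QC QD.
rewrite (@isum_telescope _ _ (prod_ratio PC PD QC QD 1)); last 2 first.
- by lia.
- move=> k /factors0[PC0 PD0 QC0 QD0].
  by rewrite three_term_identity // prod_ratio_diff.
have iprod_below (A : int -> R[i]) : iprod A 1 (- n%:Z - 1) = (iprod A (- n%:Z) 0)^-1.
  by rewrite iprodV ?subrr //; lia.
rewrite /prod_ratio !iprod_below !invrK.
by congr (_ - _); rewrite !(mulrC _^-1).
Qed.
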